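(* Let $\lambda$ be a nonzero real number and $n$ a positive integer. Then $$\beta_{n-1,-\lambda}(2\lambda+1)=\sum_{k=1}^{n}(k-1)!\,(-1)^{n-k}H_{k,-\lambda}\,S_{2,\lambda}(n,k).$$
   Context: For a nonzero real parameter $\mu$ (used here with $\mu=\lambda$ and $\mu=-\lambda$), real $y$ and integer $k\ge0$: $(y)_{0,\mu}=1$, $(y)_{k,\mu}=y(y-\mu)\cdots(y-(k-1)\mu)$; $(y)_0=1$, $(y)_k=y(y-1)\cdots(y-k+1)$. The degenerate exponential is $e_\mu^x(t)=\sum_{k\ge0}(x)_{k,\mu}t^k/k!=(1+\mu t)^{x/\mu}$, $e_\mu(t)=e^1_\mu(t)$. The degenerate Bernoulli polynomials are defined by $\frac{t}{e_\mu(t)-1}e_\mu^x(t)=\sum_{n\ge0}\beta_{n,\mu}(x)\frac{t^n}{n!}$. The degenerate Stirling numbers of the second kind $S_{2,\mu}(n,k)$ are defined by $(x)_{n,\mu}=\sum_{k=0}^{n}S_{2,\mu}(n,k)(x)_{k}$ ($n\ge0$). The degenerate harmonic numbers are $H_{0,\mu}=0$ and $H_{n,\mu}=\sum_{k=1}^{n}\frac{1}{\mu}\binom{\mu}{k}(-1)^{k-1}$ for $n\ge1$. *)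

From mathcomp Require Import all_boot all_order all_algebra.
From mathcomp Require Import reals.
Set Implicit Arguments. Unset Strict Implicit. Unset Printing Implicit Defensive.
Import Order.TTheory GRing.Theory Num.Theory.
Local Open Scope ring_scope.

Section Deg.
Variable R : realType.

Definition dfall (y mu : R) (k : nat) : R := \prod_(i < k) (y - i%:R * mu).

Definition fall (y : R) (k : nat) : R := \prod_(i < k) (y - i%:R).

Definition rbinom (y : R) (k : nat) : R := fall y k / k`!%:R.

(* Formal power series are coefficient sequences nat -> R. *)
Definition fps_mul (a b : nat -> R) (n : nat) : R :=
  \sum_(i < n.+1) a i * b (n - i)%N.

(* first n+1 coefficients of the formal inverse of a (a 0 <> 0) *)
Fixpoint fps_inv_upto (a : nat -> R) (n : nat) : seq R :=
  match n with
  | 0 => [:: (a 0%N)^-1]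
  | m.+1 => let s := fps_inv_upto a m in
      rcons s (- (a 0%N)^-1 * \sum_(k < m.+1) a k.+1 * nth 0 s (m - k)%N)
  end.

Definition fps_inv (a : nat -> R) (n : nat) : R := nth 0 (fps_inv_upto a n) n.

(* coefficients of e_mu^x(t) = sum_k (x)_{k,mu} t^k / k! *)
Definition edeg (mu x : R) (k : nat) : R := dfall x mu k / k`!%:R.

(* coefficients of (e_mu(t) - 1) / t *)
Definition edeg1_div_t (mu : R) (k : nat) : R := edeg mu 1 k.+1.

(* degenerate Bernoulli polynomials:
   t/(e_mu(t)-1) e_mu^x(t) = sum_n beta_{n,mu}(x) t^n / n!  (formal power series) *)
Definition dbern (mu x : R) (n : nat) : R :=
  n`!%:R * fps_mul (fps_inv (edeg1_div_t mu)) (edeg mu x) n.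

Definition dharm (mu : R) (n : nat) : R :=
  \sum_(1 <= k < n.+1) mu^-1 * rbinom mu k * (-1) ^+ (k.-1).

End Deg.

From mathcomp Require Import all_boot all_order all_algebra.
From mathcomp Require Import reals ring.
Import Order.TTheory GRing.Theory Num.Theory.
Set Implicit Arguments. Unset Strict Implicit. Unset Printing Implicit Defensive.
Local Open Scope ring_scope.

(* Write S(n,k) for S_{2,lam}(n,k), c_k = (k-1)! (-1)^(k-1) H_{k,-lam} and
   r_n = sum_k c_k S(n,k); the claim is beta_{n-1,-lam}(2 lam + 1) = (-1)^(n-1) r_n.
   Comparing coefficients in the basis of falling factorials (x)_k turns
   (x)_{n+1,lam} = (x)_{n,lam} (x - n lam) and the binomial theorem for
   (x + 1)_{n,lam} into two recurrences for S(n,k).  Together with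
   c_{k+1} + k c_k = d_k := (-lam)_{k+1} / (-lam (k+1)) they show that
   P(t) = sum_n r_{n+1} t^n/n! and U(t) = sum_n (sum_k d_k S(n,k)) t^n/n! satisfy
   (1 + lam t) P(t) = U(t) and U(t) (e_lam(t) - 1) = t / (1 + lam t) = t e_lam^{-lam}(t).
   Hence (e_lam^{-1}(t) - 1)/t * P(t) = - e_lam^{-2 lam - 1}(t), and the substitution
   t -> -t turns this into (e_{-lam}(t) - 1)/t * sum_n (-1)^n r_{n+1} t^n/n! =
   e_{-lam}^{2 lam + 1}(t), that is beta_{n,-lam}(2 lam + 1) = (-1)^n r_{n+1}.
   The power series identities are checked in the rings R[X]/(X^(N+1)). *)

Lemma fact_neq0 (R : numDomainType) n : n`!%:R != 0 :> R.
Proof. by rewrite pnatr_eq0 eqn0Ngt fact_gt0. Qed.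

Lemma big_ord_widen0 (V : nmodType) m n (F : nat -> V) :
  (m <= n)%N -> (forall k, (m <= k)%N -> F k = 0) ->
  \sum_(k < m) F k = \sum_(k < n) F k.
Proof.
move=> lemn F0; rewrite (big_ord_widen n F lemn) big_mkcond /=.
by apply: eq_bigr => k _; case: ltnP => // /F0 ->.
Qed.

Lemma big_ord_shift0 (V : nmodType) n (g : nat -> V) :
  g 0%N = 0 -> g n.+1 = 0 -> \sum_(j < n.+1) g j.+1 = \sum_(j < n.+1) g j.
Proof.
move=> g0 gn; transitivity (\sum_(j < n.+2) g j).
  by rewrite [RHS]big_ord_recl g0 add0r.
by rewrite big_ord_recr /= gn addr0.
Qed.

Lemma sign_sqr (R : comPzRingType) k : (-1) ^+ k * (-1) ^+ k = 1 :> R.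
Proof. by rewrite -exprMn mulrNN mulr1 expr1n. Qed.

Section FallingFactorials.
Variable R : realType.
Implicit Types (x y mu : R) (c d : nat -> R).

Lemma dfall0 y mu : dfall y mu 0 = 1.
Proof. by rewrite /dfall big_ord0. Qed.

Lemma dfallS y mu n : dfall y mu n.+1 = dfall y mu n * (y - n%:R * mu).
Proof. by rewrite /dfall big_ord_recr. Qed.

Lemma dfall0l mu n : dfall 0 mu n = (n == 0)%:R.
Proof.
by case: n => [|n]; rewrite ?dfall0 // /dfall big_ord_recl /= mul0r subrr mul0r.
Qed.

Lemma dfallN y mu n : dfall y (- mu) n = (-1) ^+ n * dfall (- y) mu n.
Proof. by elim: n => [|n IHn]; rewrite ?dfall0 ?mulr1 // !dfallS IHn exprS; ring. Qed.

Lemma dfall_opp mu n : dfall (- mu) mu n = (- mu) ^+ n * n`!%:R.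
Proof.
by elim: n => [|n IHn]; rewrite ?dfall0 ?mulr1 // dfallS IHn factS natrM exprS; ring.
Qed.

Lemma dfallD x y mu n :
  dfall (x + y) mu n =
  \sum_(i < n.+1) 'C(n, i)%:R * dfall x mu i * dfall y mu (n - i).
Proof.
elim: n => [|n IHn]; first by rewrite big_ord1 !dfall0 !mulr1.
have split_factor (i : 'I_n.+1) :
    'C(n, i)%:R * dfall x mu i * dfall y mu (n - i) * (x + y - n%:R * mu) =
    'C(n, i)%:R * dfall x mu i.+1 * dfall y mu (n - i) +
    'C(n, i)%:R * dfall x mu i * dfall y mu (n - i).+1.
  by rewrite !dfallS (natrB _ (ltn_ord i)); ring.
rewrite dfallS IHn big_distrl (eq_bigr _ (fun i _ => split_factor i)) big_split /=.
rewrite [in RHS]big_ord_recl.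
under [in RHS]eq_bigr => i _ do rewrite binS subSS natrD !mulrDl.
rewrite big_split /= [RHS]addrA [RHS]addrC; congr (_ + _).
rewrite big_ord_recl [in RHS]big_ord_recr /= (bin_small (ltnSn n)) !mul0r addr0.
rewrite !bin0 !subn0 !dfall0; congr (_ + _); apply: eq_bigr => i _.
by rewrite /bump add1n subnSK.
Qed.

Lemma fall0 y : fall y 0 = 1.
Proof. by rewrite /fall big_ord0. Qed.

Lemma fallS y n : fall y n.+1 = fall y n * (y - n%:R).
Proof. by rewrite /fall big_ord_recr. Qed.

Lemma fallSl y n : fall y n.+1 = y * fall (y - 1) n.
Proof.
rewrite /fall big_ord_recl subr0; congr (_ * _); apply: eq_bigr => i _.
by rewrite -[X in X%:R]/(i.+1) -natr1 opprD addrA addrAC.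
Qed.

Lemma fall_mulB y a n : fall y n * (y - a) = fall y n.+1 + (n%:R - a) * fall y n.
Proof. by rewrite fallS; ring. Qed.

Lemma fall0l n : fall (0 : R) n = (n == 0)%:R.
Proof. by case: n => [|n]; rewrite ?fall0 // fallSl mul0r. Qed.

Lemma fall_add1 y n : fall (y + 1) n = fall y n + n%:R * fall y n.-1.
Proof.
by case: n => [|n]; rewrite ?fall0 ?mul0r ?addr0 // fallSl addrK fallS -natr1; ring.
Qed.

Lemma fall_natr m n : fall m%:R n = (m ^_ n)%:R :> R.
Proof.
elim: n => [|n IHn]; first by rewrite fall0 ffactn0.
rewrite fallS IHn ffactnSr natrM; case: (leqP n m) => [lenm|ltmn].
  by rewrite natrB.
by rewrite ffact_small // !mul0r.
Qed.

(* Evaluating at [x = k] kills every [fall x j] with [j > k], so the coefficients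
   are determined one after the other. *)
Lemma eq_fall_coef K c d :
    (forall x, \sum_(k < K) c k * fall x k = \sum_(k < K) d k * fall x k) ->
  forall k, (k < K)%N -> c k = d k.
Proof.
move=> eq_cd k; elim/ltn_ind: k => k IHk ltkK; apply/eqP; rewrite -subr_eq0.
have /eqP := eq_cd k%:R; rewrite -subr_eq0 -sumrB (bigD1 (Ordinal ltkK)) //=.
rewrite big1 ?addr0 => [|j neq_jk]; rewrite -mulrBl fall_natr.
  by rewrite ffactnn mulf_eq0 pnatr_eq0 eqn0Ngt fact_gt0 orbF.
case: (ltngtP j k) => [ltjk|ltkj|eq_jk].
- by rewrite IHk ?subrr ?mul0r // (ltn_trans ltjk).
- by rewrite ffact_small // mulr0.
- by move: neq_jk; rewrite -(inj_eq val_inj) /= eq_jk eqxx.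
Qed.

End FallingFactorials.

Section PowerSeries.
Variable R : realType.
Implicit Types a b : nat -> R.

Lemma fps_mul_egf a b n :
  fps_mul (fun i => a i / i`!%:R) (fun i => b i / i`!%:R) n =
  (\sum_(i < n.+1) 'C(n, i)%:R * a i * b (n - i)%N) / n`!%:R.
Proof.
rewrite /fps_mul mulr_suml; apply: eq_bigr => i _.
have /bin_fact fact_n : (i <= n)%N by rewrite -ltnS.
rewrite -fact_n !natrM; field.
by rewrite !fact_neq0 pnatr_eq0 -lt0n bin_gt0 -ltnS ltn_ord.
Qed.

Lemma fps_mul_sign a b n :
  fps_mul (fun i => (-1) ^+ i * a i) (fun i => (-1) ^+ i * b i) n =
  (-1) ^+ n * fps_mul a b n.
Proof.
rewrite /fps_mul mulr_sumr; apply: eq_bigr => i _.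
have sign_split : (-1) ^+ n = (-1) ^+ i * (-1) ^+ (n - i) :> R.
  by rewrite -exprD subnKC // -ltnS.
by rewrite sign_split; ring.
Qed.

Lemma fps_mulNl a b n : fps_mul (fun i => - a i) b n = - fps_mul a b n.
Proof. by rewrite /fps_mul -sumrN; apply: eq_bigr => i _; rewrite mulNr. Qed.

Lemma size_fps_inv_upto a n : size (fps_inv_upto a n) = n.+1.
Proof. by elim: n => [|n IHn] //=; rewrite size_rcons IHn. Qed.

Lemma nth_fps_inv_upto a n j :
  (j <= n)%N -> nth 0 (fps_inv_upto a n) j = fps_inv a j.
Proof.
elim: n => [|n IHn] lejn; first by move: lejn; rewrite leqn0 => /eqP ->.
move: lejn; rewrite leq_eqVlt => /predU1P [-> //|ltjn].
by rewrite /= nth_rcons size_fps_inv_upto ltjn IHn.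
Qed.

Lemma fps_invS a m :
  fps_inv a m.+1 = - (a 0%N)^-1 * \sum_(k < m.+1) a k.+1 * fps_inv a (m - k).
Proof.
rewrite {1}/fps_inv /= nth_rcons size_fps_inv_upto ltnn eqxx; congr (_ * _).
by apply: eq_bigr => k _; rewrite nth_fps_inv_upto // leq_subr.
Qed.

Lemma fps_mulV a j : a 0%N != 0 -> fps_mul a (fps_inv a) j = (j == 0)%:R.
Proof.
move=> a0_neq0; case: j => [|m].
  by rewrite /fps_mul big_ord1 /fps_inv /= mulfV.
rewrite /fps_mul big_ord_recl subn0 fps_invS mulrA mulrN mulfV // mulN1r.
by rewrite addrC; apply/eqP; rewrite subr_eq0; apply/eqP/eq_bigr => i _; rewrite subSS.
Qed.

End PowerSeries.

Section TruncatedPowerSeries.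
Variables (R : realType) (N : nat).
Implicit Types (a b : nat -> R) (p : {poly R}).
Local Notation T := {poly %/ ('X^(N.+1) : {poly R})}.

Definition tps a : T := in_qpoly _ (\poly_(i < N.+1) a i).

Lemma size_qpolyXn (q : T) : (size q <= N.+1)%N.
Proof. by apply: leq_trans (size_npoly q) _; rewrite mk_monic_Xn size_polyXn. Qed.

Lemma coef_in_qpolyXn p i :
  (in_qpoly 'X^(N.+1) p : {poly R})`_i = if (i <= N)%N then p`_i else 0.
Proof.
case: leqP => [leiN|ltNi]; last by rewrite nth_default // (leq_trans (size_qpolyXn _)).
rewrite /= mk_monic_Xn {2}(Pdiv.RingMonic.rdivp_eq (monicXn R N.+1) p).
by rewrite coefD coefMXn ltnS leiN add0r.
Qed.

Lemma qpolyXnP (q r : T) :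
  (forall i, (i <= N)%N -> q`_i = r`_i) -> q = r.
Proof.
move=> eq_qr; apply: val_inj; apply/polyP => i; case: (leqP i N) => [/eq_qr //|ltNi].
by rewrite !nth_default // (leq_trans (size_qpolyXn _)).
Qed.

Lemma coef_tps a i : (tps a : {poly R})`_i = if (i <= N)%N then a i else 0.
Proof. by rewrite coef_in_qpolyXn coef_poly ltnS; case: leqP. Qed.

Lemma tpsP a b : tps a = tps b <-> (forall i, (i <= N)%N -> a i = b i).
Proof.
split=> [eq_ab i leiN | eq_ab].
  by have := congr1 (fun q : T => (q : {poly R})`_i) eq_ab; rewrite /= !coef_tps leiN.
by apply: qpolyXnP => i leiN; rewrite !coef_tps leiN eq_ab.
Qed.

Lemma tps1 : tps (fun k => (k == 0)%:R) = 1.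
Proof.
by apply: qpolyXnP => i leiN; rewrite coef_tps leiN -in_qpoly1 coef_in_qpolyXn leiN coef1.
Qed.

Lemma tpsD a b : tps (fun k => a k + b k) = tps a + tps b.
Proof. by apply: qpolyXnP => i leiN; rewrite coefD !coef_tps leiN. Qed.

Lemma tpsB a b : tps (fun k => a k - b k) = tps a - tps b.
Proof. by apply: qpolyXnP => i leiN; rewrite coefB !coef_tps leiN. Qed.

Lemma tpsM a b : tps a * tps b = tps (fps_mul a b).
Proof.
apply: qpolyXnP => i leiN; rewrite -rmorphM coef_in_qpolyXn coef_tps leiN coefM.
apply: eq_bigr => j _; have lejN : (j <= N)%N by rewrite (leq_trans _ leiN) // -ltnS.
by rewrite !coef_poly !ltnS lejN (leq_trans (leq_subr _ _) leiN).
Qed.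

Lemma tpsX a : 'qX * tps a = tps (fun k => if k is k'.+1 then a k' else 0).
Proof.
apply: qpolyXnP => i leiN; rewrite -rmorphM coef_in_qpolyXn coef_tps leiN coefXM.
by case: i leiN => [|i] leiN //=; rewrite coef_poly ltnS ltnW.
Qed.

Lemma tpsZ c a : in_qpoly _ c%:P * tps a = tps (fun k => c * a k).
Proof.
apply: qpolyXnP => i leiN; rewrite -rmorphM coef_in_qpolyXn coef_tps leiN coefCM.
by rewrite coef_poly ltnS leiN.
Qed.

Lemma tpsX_eq0 a : 'qX * tps a = 0 -> forall i, (i < N)%N -> a i = 0.
Proof.
rewrite tpsX => eq0 i ltiN.
by have := congr1 (fun q : T => (q : {poly R})`_i.+1) eq0; rewrite /= coef_tps ltiN coef0.
Qed.

End TruncatedPowerSeries.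

Lemma fps_inv_mul_eq (R : realType) (a w b : nat -> R) m :
    a 0%N != 0 -> (forall j, (j <= m)%N -> fps_mul a w j = b j) ->
  fps_mul (fps_inv a) b m = w m.
Proof.
move=> a0_neq0 eq_awb.
have inv_a : tps m (fps_inv a) * tps m a = 1.
  by rewrite mulrC tpsM -tps1; apply/tpsP => j _; exact: fps_mulV.
have tps_b : tps m b = tps m a * tps m w.
  by rewrite tpsM; apply/tpsP => j lejm; rewrite eq_awb.
have : tps m (fps_mul (fps_inv a) b) = tps m w by rewrite -tpsM tps_b mulrA inv_a mul1r.
by move/tpsP; apply.
Qed.

Section DegenerateExponentialSeries.
Variables (R : realType) (N : nat) (mu : R).
Implicit Types x y : R.

Lemma tps_edegD x y : tps N (edeg mu x) * tps N (edeg mu y) = tps N (edeg mu (x + y)).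
Proof. by rewrite tpsM; apply/tpsP => i _; rewrite /edeg fps_mul_egf dfallD. Qed.

Lemma tps_edeg0 : tps N (edeg mu 0) = 1.
Proof.
rewrite -tps1; apply/tpsP => i _.
by rewrite /edeg dfall0l; case: i => [|i]; rewrite ?divr1 ?mul0r.
Qed.

Lemma tps_edeg_shift x : tps N (edeg mu x) = 1 + 'qX * tps N (fun k => edeg mu x k.+1).
Proof.
rewrite tpsX -tps1 -tpsD; apply/tpsP => -[|i] _ /=; last by rewrite add0r.
by rewrite addr0 /edeg dfall0 divr1.
Qed.

Lemma edeg_opp k : edeg mu (- mu) k = (- mu) ^+ k.
Proof. by rewrite /edeg dfall_opp mulfK // fact_neq0. Qed.

End DegenerateExponentialSeries.

Lemma dharm0 (R : realType) (mu : R) : dharm mu 0 = 0.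
Proof. by rewrite /dharm big_geq. Qed.

Lemma dharmS (R : realType) (mu : R) k :
  dharm mu k.+1 = dharm mu k + mu^-1 * rbinom mu k.+1 * (-1) ^+ k.
Proof. by rewrite /dharm big_nat_recr. Qed.

Section DegenerateStirling.
Variables (R : realType) (lam : R) (S2 : nat -> nat -> R).
Hypothesis hS2 : forall (m : nat) (x : R),
  dfall x lam m = \sum_(k < m.+1) S2 m k * fall x k.

(* [hS2] says nothing about [S2 m k] for [k > m]; [stir] replaces these junk values
   by 0. *)
Definition stir n k := if (k <= n)%N then S2 n k else 0.

Lemma stir_small n k : (n < k)%N -> stir n k = 0.
Proof. by rewrite /stir ltnNge => /negbTE ->. Qed.

Lemma dfall_stir K n x : (n < K)%N -> dfall x lam n = \sum_(k < K) stir n k * fall x k.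
Proof.
move=> ltnK; rewrite -(big_ord_widen0 (F := fun k => stir n k * fall x k) ltnK).
  by rewrite hS2; apply: eq_bigr => k _; rewrite /stir -ltnS ltn_ord.
by move=> k /stir_small ->; rewrite mul0r.
Qed.

Lemma stir0 n : stir n 0 = (n == 0)%:R.
Proof.
rewrite -(dfall0l lam n) (dfall_stir _ (ltnSn n)) big_ord_recl fall0l mulr1.
by rewrite big1 ?addr0 // => k _; rewrite fall0l mulr0.
Qed.

Lemma stirS n k : stir n.+1 k.+1 = stir n k + (k.+1%:R - n%:R * lam) * stir n k.+1.
Proof.
have [ltnk|lekn] := ltnP n k.
  by rewrite !stir_small ?mulr0 ?addr0 // ltnW.
pose c j := (if j is j'.+1 then stir n j' else 0) + (j%:R - n%:R * lam) * stir n j.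
apply: (@eq_fall_coef _ n.+2 _ c) => [x|]; last by rewrite !ltnS.
rewrite -dfall_stir // dfallS (dfall_stir x (ltnSn n)) big_distrl /=.
under eq_bigr => j _ do rewrite -mulrA fall_mulB mulrDr.
under [in RHS]eq_bigr => j _ do rewrite mulrDl.
rewrite !big_split /= [in RHS]big_ord_recl mul0r add0r [X in _ = _ + X]big_ord_recr /=.
rewrite stir_small // mulr0 mul0r addr0; congr (_ + _).
by apply: eq_bigr => j _; rewrite mulrCA mulrA.
Qed.

Lemma stir_binom_conv n k :
  \sum_(i < n.+1) 'C(n, i)%:R * dfall 1 lam (n - i) * stir i k =
  stir n k + k.+1%:R * stir n k.+1.
Proof.
have [ltnk|lekn] := ltnP n k.
  rewrite (stir_small ltnk) (@stir_small n k.+1 (ltnW ltnk)) mulr0 addr0.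
  apply: big1 => i _.
  by rewrite stir_small ?mulr0 // (leq_ltn_trans _ ltnk) // -ltnS.
pose b j := \sum_(i < n.+1) 'C(n, i)%:R * dfall 1 lam (n - i) * stir i j.
pose c j := stir n j + j.+1%:R * stir n j.+1.
apply: (@eq_fall_coef _ n.+1 b c) => [x|]; last by rewrite ltnS.
have -> : \sum_(j < n.+1) b j * fall x j = dfall (x + 1) lam n.
  rewrite dfallD; under eq_bigr => j _ do rewrite mulr_suml.
  rewrite exchange_big /=; apply: eq_bigr => i _.
  rewrite mulrAC (dfall_stir x (ltn_ord i)) mulr_sumr; apply: eq_bigr => j _; ring.
rewrite (dfall_stir (x + 1) (ltnSn n)).
under eq_bigr => j _ do rewrite fall_add1 mulrDr.
under [in RHS]eq_bigr => j _ do rewrite mulrDl.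
rewrite !big_split /=; congr (_ + _).
rewrite big_ord_recl [in RHS]big_ord_recr /= (stir_small (ltnSn n)).
rewrite mul0r mulr0 add0r mulr0 mul0r addr0; apply: eq_bigr => j _.
by rewrite /bump /= add1n add0n; ring.
Qed.

Definition hcoef k := (k.-1)`!%:R * (-1) ^+ k.-1 * dharm (- lam) k.
Definition dcoef k := (- lam)^-1 * fall (- lam) k.+1 / k.+1%:R.

Lemma hcoef0 : hcoef 0 = 0.
Proof. by rewrite /hcoef dharm0 mulr0. Qed.

Lemma hcoefS k : hcoef k.+1 + k%:R * hcoef k = dcoef k.
Proof.
have -> : k%:R * hcoef k = - (k`!%:R * (-1) ^+ k * dharm (- lam) k).
  case: k => [|k]; first by rewrite hcoef0 dharm0 !mulr0 oppr0.
  by rewrite /hcoef /= factS natrM exprS; ring.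
rewrite /hcoef /= dharmS /rbinom /dcoef factS natrM.
(* Naming (-lam)^-1 keeps [field] from asking for lam != 0. *)
have := sign_sqr R k; set c := (- lam)^-1 => sign2.
by field: sign2; rewrite addrC natr1 pnatr_eq0 fact_neq0.
Qed.

Definition hsum n := \sum_(k < n.+1) hcoef k * stir n k.
Definition dsum n := \sum_(k < n.+1) dcoef k * stir n k.

Lemma hsumS n : hsum n.+1 = dsum n - n%:R * lam * hsum n.
Proof.
pose g j := hcoef j * (j%:R - n%:R * lam) * stir n j.
have g0 : g 0%N = 0 by rewrite /g hcoef0 !mul0r.
have gn : g n.+1 = 0 by rewrite /g stir_small ?mulr0.
rewrite /hsum big_ord_recl hcoef0 mul0r add0r.
under eq_bigr => j _ do rewrite stirS mulrDr mulrA -/(g j.+1).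
rewrite big_split /= (big_ord_shift0 g0 gn).
rewrite /dsum mulr_sumr -sumrB -big_split; apply: eq_bigr => j _ /=.
by rewrite /g -hcoefS -[bump 0 j]/(j.+1); ring.
Qed.

Lemma dsum_widen K n : (n < K)%N -> dsum n = \sum_(k < K) dcoef k * stir n k.
Proof.
move=> ltnK; apply: (big_ord_widen0 (F := fun k => dcoef k * stir n k)) => // k.
by move/stir_small ->; rewrite mulr0.
Qed.

Lemma dsum_binom_conv n :
  \sum_(i < n.+1) 'C(n, i)%:R * dfall 1 lam (n - i) * dsum i - dsum n =
  (- lam)^-1 * (dfall (- lam) lam n - (n == 0)%:R).
Proof.
have -> : \sum_(i < n.+1) 'C(n, i)%:R * dfall 1 lam (n - i) * dsum i =
    \sum_(k < n.+1) dcoef k * (stir n k + k.+1%:R * stir n k.+1).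
  under eq_bigr => i _ do rewrite (dsum_widen (ltn_ord i)) mulr_sumr.
  rewrite exchange_big /=; apply: eq_bigr => k _.
  by rewrite -stir_binom_conv mulr_sumr; apply: eq_bigr => i _; ring.
under eq_bigr => k _ do rewrite mulrDr.
rewrite big_split /= addrAC subrr add0r -stir0.
rewrite (dfall_stir (- lam) (leqnSn n.+1)) [in RHS]big_ord_recl fall0 mulr1.
rewrite [in RHS]addrC addKr mulr_sumr; apply: eq_bigr => k _.
rewrite /dcoef lift0; set c := (- lam)^-1.
by field; rewrite addrC natr1 pnatr_eq0.
Qed.

Lemma signed_hsum n :
  (-1) ^+ n * hsum n.+1 =
  \sum_(1 <= k < n.+2) (k.-1)`!%:R * (-1) ^+ (n.+1 - k) * dharm (- lam) k * S2 n.+1 k.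
Proof.
rewrite /hsum big_ord_recl hcoef0 mul0r add0r big_add1 big_mkord mulr_sumr /=.
apply: eq_bigr => k _; rewrite -[bump 0 k]/(k.+1) /stir ltn_ord /hcoef /= subSS.
have -> : (-1) ^+ n = (-1) ^+ (n - k) * (-1) ^+ k :> R by rewrite -exprD subnK // -ltnS.
have := sign_sqr R k; set s := (-1) ^+ k => s2.
by rewrite -[RHS]mulr1 -s2; ring.
Qed.

End DegenerateStirling.

Section GeneratingFunctions.
Variables (R : realType) (lam : R) (S2 : nat -> nat -> R).
Hypothesis hS2 : forall (m : nat) (x : R),
  dfall x lam m = \sum_(k < m.+1) S2 m k * fall x k.
Hypothesis lam_neq0 : lam != 0.

Section Truncated.
Variable N : nat.
Local Notation tps := (tps N).
Let P := tps (fun n => hsum lam S2 n.+1 / n`!%:R).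
Let U := tps (fun n => dsum lam S2 n / n`!%:R).
Let G := tps (edeg lam (- lam)).
Let E x := tps (edeg lam x).
Let Lam := in_qpoly ('X^(N.+1)) lam%:P.

Lemma hsum_series_rec : P + 'qX * Lam * P = U.
Proof.
rewrite -mulrA tpsZ tpsX -tpsD; apply/tpsP => -[|n] _ /=.
  by rewrite addr0 !divr1 (hsumS hS2) !mul0r subr0.
by rewrite (hsumS hS2) factS natrM; field; rewrite fact_neq0 addrC natr1 pnatr_eq0.
Qed.

Lemma geometric_series : G + 'qX * Lam * G = 1.
Proof.
rewrite -mulrA tpsZ tpsX -tpsD -tps1; apply/tpsP => -[|n] _ /=.
  by rewrite edeg_opp addr0.
by rewrite !edeg_opp exprS mulNr addNr.
Qed.

Lemma dsum_series_conv : U * (E 1 - 1) = 'qX * G.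
Proof.
rewrite mulrBr mulr1 tpsM tpsX -tpsB; apply/tpsP => n _.
rewrite /edeg fps_mul_egf -mulrBl.
under eq_bigr => i _ do rewrite mulrAC.
rewrite (dsum_binom_conv hS2); case: n => [|n] /=; rewrite !dfall_opp.
  by rewrite expr0 mul1r subrr mulr0 mul0r.
by rewrite subr0 exprS; field; rewrite !fact_neq0 lam_neq0.
Qed.

(* The first series is (E (-1) - 1) / X; as X cannot be cancelled in R[X]/(X^(N+1)),
   the identity is stated multiplied by 'qX. *)
Lemma hsum_series_identity :
  'qX * tps (fun k => fps_mul (fun j => edeg lam (-1) j.+1)
                        (fun n => hsum lam S2 n.+1 / n`!%:R) k +
                      edeg lam (- (2 * lam + 1)) k) = 0.
Proof.
set Dm := tps (fun j => edeg lam (-1) j.+1).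
rewrite tpsD -tpsM -/Dm -/P.
have E1Em : E 1 * E (-1) = 1 by rewrite /E tps_edegD subrr tps_edeg0.
have GGEm : G * G * E (-1) = tps (edeg lam (- (2 * lam + 1))).
  by rewrite /G /E !tps_edegD; congr (tps (edeg lam _)); ring.
have XDm : 'qX * Dm = E (-1) - 1.
  by rewrite /E (tps_edeg_shift N lam (-1)) addrAC subrr add0r.
have E1P : (E 1 - 1) * P = 'qX * G * G.
  transitivity ((E 1 - 1) * P * (G + 'qX * Lam * G)).
    by rewrite geometric_series mulr1.
  by rewrite -dsum_series_conv -hsum_series_rec; ring.
have EmP : (E (-1) - 1) * P = - E (-1) * ((E 1 - 1) * P).
  by rewrite -[in LHS]E1Em; ring.
by rewrite -GGEm mulrDr mulrA XDm EmP E1P; ring.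
Qed.

End Truncated.

Lemma hsum_series_coef m :
  fps_mul (fun j => edeg lam (-1) j.+1) (fun n => hsum lam S2 n.+1 / n`!%:R) m =
  - edeg lam (- (2 * lam + 1)) m.
Proof.
by apply/eqP; rewrite -addr_eq0; apply/eqP/(tpsX_eq0 (hsum_series_identity m.+1)).
Qed.

Lemma dbern_hsum m : dbern (- lam) (2 * lam + 1) m = (-1) ^+ m * hsum lam S2 m.+1.
Proof.
rewrite /dbern (fps_inv_mul_eq (w := fun j => (-1) ^+ j * (hsum lam S2 j.+1 / j`!%:R))).
- by field; rewrite fact_neq0.
- by rewrite /edeg1_div_t /edeg dfallS dfall0 mul0r subr0 mul1r divr1 oner_eq0.
move=> j _; transitivity (fps_mul (fun i => (-1) ^+ i * - edeg lam (-1) i.+1)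
    (fun i => (-1) ^+ i * (hsum lam S2 i.+1 / i`!%:R)) j).
  by apply: eq_bigr => i _; rewrite /edeg1_div_t /edeg dfallN exprS; ring.
by rewrite fps_mul_sign fps_mulNl hsum_series_coef /edeg dfallN; ring.
Qed.

End GeneratingFunctions.

Theorem theorem9 (R : realType) (lam : R) (n : nat) (S2 : nat -> nat -> R)
  (hS2 : forall (m : nat) (x : R),
      dfall x lam m = \sum_(k < m.+1) S2 m k * fall x k)
  (hlam : lam != 0) (hn : (0 < n)%N) :
  dbern (- lam) (2 * lam + 1) n.-1 =
  \sum_(1 <= k < n.+1)
     (k.-1)`!%:R * (-1) ^+ (n - k) * dharm (- lam) k * S2 n k.
Proof.
case: n hn => [//|n] _.
by rewrite (dbern_hsum hS2 hlam) signed_hsum.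
Qed.
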